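(* For every integer $t\ge1$ and every integer $u$ with $0\le u\le t$, $$\frac{2u+1}{2t}\ \ge\ \frac{1}{1+2t}+\frac{2t}{1+2t}\sum_{i=1}^u\frac{(-t)_i(-1)^i}{(t+i)\,(t)_i}\ \ge\ \frac{2u+1}{2t}-\frac{4u^3+6u^2+8u+3}{12t^2}.$$
   Context: $(a)_m=a(a+1)\cdots(a+m-1)$ denotes the rising factorial, with $(a)_0=1$. *)

From mathcomp Require Import all_boot all_order all_algebra.
Set Implicit Arguments. Unset Strict Implicit. Unset Printing Implicit Defensive.
Import Order.TTheory GRing.Theory Num.Theory.
Local Open Scope ring_scope.

Definition rising (R : pzRingType) (a : R) (m : nat) : R :=
  \prod_(k < m) (a + k%:R).

From mathcomp Require Import all_boot all_order all_algebra.
From mathcomp Require Import ring lra.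
Import Order.TTheory GRing.Theory Num.Theory.
Local Open Scope ring_scope.

(* The i-th summand equals r_i / t with r_i = prod_(j < i) (t - j) / (t + j + 1).
   Each factor lies in [0, 1] and is at least 1 - (2j + 1)/t, so by the
   Weierstrass product inequality 1 - i^2/t <= r_i <= 1.  Summing,
   u - u(u+1)(2u+1)/(6t) <= sum_(i=1..u) r_i <= u, and both bounds follow
   because the middle expression equals (1 + 2 sum_i r_i) / (1 + 2t). *)

Lemma rising_opp_sign (R : comPzRingType) (a : R) m :
  rising (- a) m * (-1) ^+ m = \prod_(j < m) (a - j%:R).
Proof.
elim: m => [|m IH]; first by rewrite /rising !big_ord0 expr0 mulr1.
by rewrite /rising !big_ord_recr /= -/(rising _ _) exprS -IH; ring.
Qed.

Lemma rising_mul_lastE (R : comPzRingType) (a : R) m :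
  (a + m%:R) * rising a m = a * \prod_(j < m) (a + j.+1%:R).
Proof.
rewrite mulrC /rising -(big_ord_recr m (fun j => a + j%:R)) big_ord_recl.
by rewrite addr0.
Qed.

Definition falling_rising_ratio {R : fieldType} (a : R) i :=
  \prod_(j < i) ((a - j%:R) / (a + j.+1%:R)).

Lemma rising_summandE (R : fieldType) (a : R) i :
  rising (- a) i * (-1) ^+ i / ((a + i%:R) * rising a i)
  = falling_rising_ratio a i / a.
Proof. by rewrite rising_opp_sign rising_mul_lastE /falling_rising_ratio prodf_div invfM; ring. Qed.

Lemma prodr_ge_1_sub_sum {R : realDomainType} {I : Type} (s : seq I) {F : I -> R} :
  (forall i, 0 <= F i <= 1) -> 1 - \sum_(i <- s) (1 - F i) <= \prod_(i <- s) F i.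
Proof.
move=> F01; elim: s => [|i s IH]; first by rewrite !big_nil subr0.
rewrite !big_cons; have /andP[F0 F1] := F01 i.
have S0 : 0 <= \sum_(j <- s) (1 - F j).
  by apply: sumr_ge0 => j _; have /andP[_ ?] := F01 j; rewrite subr_ge0.
nra.
Qed.

Lemma sumr_odd (R : comPzRingType) n :
  \sum_(j < n) (2 * j%:R + 1) = n%:R ^+ 2 :> R.
Proof. by elim: n => [|n IH]; rewrite ?big_ord0 ?expr0n // big_ord_recr IH /= -natr1; ring. Qed.

Lemma sumr_sq (R : comPzRingType) n :
  6 * \sum_(1 <= i < n.+1) i%:R ^+ 2 = n%:R * (n%:R + 1) * (2 * n%:R + 1) :> R.
Proof.
elim: n => [|n IH]; first by rewrite big_geq // mulr0 !mul0r.
by rewrite big_nat_recr //= mulrDr IH -natr1; ring.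
Qed.

Section RatioBounds.
Variables (R : realFieldType) (t : nat).

Lemma ratio_factor_bounds j : (j < t)%N ->
  let f : R := (t%:R - j%:R) / (t%:R + j.+1%:R) in
  0 <= f <= 1 /\ 1 - (2 * j%:R + 1) / t%:R <= f.
Proof.
move=> ltjt f; have tR : (0 : R) < t%:R by rewrite ltr0n (leq_ltn_trans _ ltjt).
have jt : (j%:R : R) + 1 <= t%:R by rewrite natr1 ler_nat.
have j0 : (0 : R) <= j%:R by rewrite ler0n.
rewrite /f -natr1; split.
  by rewrite divr_ge0 ?ler_pdivrMr /=; lra.
rewrite -subr_ge0 (_ : _ - _ = (2 * j%:R + 1) * (j%:R + 1)
                               / (t%:R * (t%:R + (j%:R + 1)))); last first.
  by field; apply/andP; split; lra.
by apply: divr_ge0; nra.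
Qed.

Lemma falling_rising_ratio_bounds i : (i <= t)%N ->
  0 <= falling_rising_ratio (t%:R : R) i <= 1 /\
  1 - i%:R ^+ 2 / t%:R <= falling_rising_ratio (t%:R : R) i.
Proof.
move=> le_it.
have F01 (j : 'I_i) : 0 <= ((t%:R - j%:R) / (t%:R + j.+1%:R) : R) <= 1.
  by have [] := ratio_factor_bounds _ (leq_trans (ltn_ord j) le_it).
split; first by rewrite prodr_ge0 ?prodr_ile1 // => j _; case/andP: (F01 j).
have := prodr_ge_1_sub_sum (index_enum _) F01; apply: le_trans; rewrite lerD2l lerN2.
rewrite -sumr_odd mulr_suml; apply: ler_sum => j _; rewrite lerBlDr -lerBlDl.
by have [_] := ratio_factor_bounds _ (leq_trans (ltn_ord j) le_it).
Qed.

Lemma sum_ratio_bounds u : (0 < t)%N -> (u <= t)%N ->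
  let X := \sum_(1 <= i < u.+1) falling_rising_ratio (t%:R : R) i in
  X <= u%:R /\ 6 * t%:R * u%:R - u%:R * (u%:R + 1) * (2 * u%:R + 1) <= 6 * t%:R * X.
Proof.
move=> t_gt0 le_ut X; have tR : (0 : R) < t%:R by rewrite ltr0n.
have bounds i : (i < u.+1)%N -> _ := fun lt_iu =>
  falling_rising_ratio_bounds i (leq_trans (ltnSE lt_iu) le_ut).
have sum1 : \sum_(1 <= i < u.+1) (1 : R) = u%:R.
  by rewrite sumr_const_nat subn1.
split.
  rewrite -sum1 ler_sum_nat // => i /andP[_ lt_iu].
  by have [/andP[_ ->]] := bounds i lt_iu.
have : \sum_(1 <= i < u.+1) (1 - i%:R ^+ 2 / t%:R) <= X.
  by rewrite ler_sum_nat // => i /andP[_ lt_iu]; have [_ ->] := bounds i lt_iu.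
rewrite sumrB sum1 -mulr_suml -sumr_sq.
set Q := \sum_(1 <= i < u.+1) _ => QX.
have tQ : t%:R * (Q / t%:R) = Q by rewrite mulrC divfK ?gt_eqF.
nra.
Qed.

End RatioBounds.

Theorem mainTheorem8 (t u : nat) (ht : (1 <= t)%N) (hu : (u <= t)%N) :
  let T : rat := t%:R in
  let U : rat := u%:R in
  let S : rat := 1 / (1 + 2 * T) + (2 * T) / (1 + 2 * T) *
     \sum_(1 <= i < u.+1) (rising (- T) i * (-1) ^+ i) /
                          ((T + i%:R) * rising T i) in
  ((2 * U + 1) / (2 * T) >= S) /\
  (S >= (2 * U + 1) / (2 * T)
        - (4 * U ^+ 3 + 6 * U ^+ 2 + 8 * U + 3) / (12 * T ^+ 2)).
Proof.
move=> T U S.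
have hT : 0 < T by rewrite ltr0n.
have hU : 0 <= U by rewrite ler0n.
have [X_le X_ge] := sum_ratio_bounds rat t u ht hu.
set X := \sum_(1 <= i < u.+1) _ in X_le X_ge.
have -> : S = (1 + 2 * X) / (1 + 2 * T).
  rewrite /S; under eq_bigr do rewrite rising_summandE.
  by rewrite -mulr_suml -/X; field; lra.
split; rewrite -subr_ge0.
  rewrite (_ : _ - _ = (2 * U + 1 + 4 * T * (U - X)) / (2 * T * (1 + 2 * T))).
    by apply: divr_ge0; nra.
  by field; lra.
rewrite (_ : _ - _ = (12 * T ^+ 2 * (1 + 2 * X) - (6 * T * (2 * T + 1) * (2 * U + 1)
        - (2 * T + 1) * (4 * U ^+ 3 + 6 * U ^+ 2 + 8 * U + 3)))
     / (12 * T ^+ 2 * (1 + 2 * T))); last by field; lra.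
apply: divr_ge0; last by nra.
(* 4t times the lower bound on 6tX cancels everything but 4U^3 + 6U^2 + 8U + 3. *)
move: X_ge; rewrite -subr_ge0 => /(mulr_ge0 (ltW hT)).
have := mulr_ge0 hU hU; have := mulr_ge0 hU (mulr_ge0 hU hU).
lra.
Qed.
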